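(* There exists a semifilter $\mathcal{T}$ that is homeomorphic to $\mathbf{T}$, where $\mathbf{T}$ is the (unique up to homeomorphism) zero-dimensional space that is the union of a completely metrizable subspace and a countable subspace, is nowhere $\sigma$-compact, and is nowhere completely metrizable.
   Context: All spaces are separable metrizable. For a topological property $\mathcal{P}$, a space $X$ is nowhere $\mathcal{P}$ if $X$ is non-empty and no non-empty open subspace of $X$ has $\mathcal{P}$. It is known (van Douwen) that a zero-dimensional space with the three listed properties is unique up to homeomorphism; this space is denoted $\mathbf{T}$. A semifilter (on $\omega$) is a collection $\mathcal{S}\subseteq\mathcal{P}(\omega)$ such that $\varnothing\notin\mathcal{S}$, $\omega\in\mathcal{S}$, $\mathcal{S}$ is closed under finite modifications, and $\mathcal{S}$ is upward-closed; it is viewed as a subspace of $2^\omega$ via characteristic functions. *)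

(* point-set topology of subspaces of the Cantor space 2^omega,
   developed concretely. Every space here is a subspace of 2^omega
   (hence separable metrizable). *)
From Stdlib Require Import Reals List.
Open Scope R_scope.

(* points of the Cantor space 2^omega = characteristic functions of subsets of omega *)
Definition pt := nat -> bool.
Definition subspace := pt -> Prop.

(* x and y agree on the first n coordinates (basic clopen nbhds of 2^omega) *)
Definition agree (x y : pt) (n : nat) : Prop := forall i, (i < n)%nat -> x i = y i.

Definition subset (A B : subspace) : Prop := forall x, A x -> B x.

Definition rel_open (X U : subspace) : Prop :=
  subset U X /\
  forall x, U x -> exists n, forall y, X y -> agree x y n -> U y.

Definition rel_closed (X U : subspace) : Prop :=
  subset U X /\ rel_open X (fun y => X y /\ ~ U y).

Definition rel_clopen (X U : subspace) : Prop := rel_open X U /\ rel_closed X U.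

Definition zero_dimensional (X : subspace) : Prop :=
  forall U x, rel_open X U -> U x ->
    exists V, rel_clopen X V /\ V x /\ subset V U.

Definition nonempty (X : subspace) : Prop := exists x, X x.

Definition open_set (U : subspace) : Prop := rel_open (fun _ => True) U.

Definition compact (K : subspace) : Prop :=
  forall (I : Type) (U : I -> subspace),
    (forall i, open_set (U i)) ->
    (forall x, K x -> exists i, U i x) ->
    exists l : list I, forall x, K x -> exists i, In i l /\ U i x.

Definition sigma_compact (X : subspace) : Prop :=
  exists K : nat -> subspace,
    (forall n, compact (K n)) /\ (forall x, X x <-> exists n, K n x).

Definition countable (C : subspace) : Prop :=
  exists f : nat -> pt, forall x, C x -> exists n, f n = x.

Definition completely_metrizable (X : subspace) : Prop :=
  exists d : pt -> pt -> R,
    (forall x y, X x -> X y -> 0 <= d x y) /\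
    (forall x y, X x -> X y -> (d x y = 0 <-> x = y)) /\
    (forall x y, X x -> X y -> d x y = d y x) /\
    (forall x y z, X x -> X y -> X z -> d x z <= d x y + d y z) /\
    (forall x, X x -> forall eps, 0 < eps ->
        exists n, forall y, X y -> agree x y n -> d x y < eps) /\
    (forall x, X x -> forall n,
        exists eps, 0 < eps /\ forall y, X y -> d x y < eps -> agree x y n) /\
    (forall s : nat -> pt, (forall k, X (s k)) ->
       (forall eps, 0 < eps -> exists N, forall m k, (m >= N)%nat -> (k >= N)%nat ->
            d (s m) (s k) < eps) ->
       exists l, X l /\ forall eps, 0 < eps -> exists N, forall k, (k >= N)%nat ->
            d (s k) l < eps).

Definition nowhere (P : subspace -> Prop) (X : subspace) : Prop :=
  nonempty X /\ forall U, rel_open X U -> nonempty U -> ~ P U.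

(* The defining properties of van Douwen's space T (unique up to homeomorphism
   among zero-dimensional separable metrizable spaces) *)
Definition is_T (X : subspace) : Prop :=
  zero_dimensional X /\
  (exists G C, completely_metrizable G /\ countable C /\
     forall x, X x <-> (G x \/ C x)) /\
  nowhere sigma_compact X /\
  nowhere completely_metrizable X.

(* semifilter on omega, viewed as a subspace of 2^omega via characteristic functions *)
Definition semifilter (S : subspace) : Prop :=
  ~ S (fun _ => false) /\
  S (fun _ => true) /\
  (forall x y, S x -> (exists N, forall n, (n >= N)%nat -> x n = y n) -> S y) /\
  (forall x y, S x -> (forall n, x n = true -> y n = true) -> S y).

From Pilot Require Import Defs.
From Stdlib Require Import Reals List.
From Stdlib Require Import Lia Lra Arith Wf_nat.
From Stdlib Require Import Classical ClassicalEpsilon FunctionalExtensionality.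

(* The semifilter is T = {A : A ∩ 2ω is infinite} ∪ {A : A =* 2ω+1}.  Its first
   part is a G_δ, completely metrizable by the ultrametric measuring up to which
   even element of A two sets agree, and its second part is countable.
   Fix a basic open set around a point of T.  The points of that set without odd
   elements beyond its prefix form a closed set meeting T only in its first part;
   a fusion sequence escaping the n-th compact set at stage n and adding an even
   element at every stage converges to a point of T outside all the compact sets,
   so T is nowhere σ-compact.  Dually, a complete metric on the open set would make
   a fusion sequence of points of the countable part converge inside it, although
   the pointwise limit, having finitely many even elements and infinitely many
   missing odd ones, lies outside T. *)

Definition eventually (P : nat -> Prop) : Prop :=
  exists N, forall i, (N <= i)%nat -> P i.

Definition infinitely_often (b : nat -> bool) : Prop :=
  forall N, exists i, (N <= i)%nat /\ b i = true.

Lemma infinitely_often_eventually_eq (b c : nat -> bool) :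
  eventually (fun i => b i = c i) -> infinitely_often b -> infinitely_often c.
Proof.
  intros [M HM] Hb N; destruct (Hb (Nat.max M N)) as (i & Hi & Hbi).
  exists i; split; [lia|]. rewrite <- HM by lia; exact Hbi.
Qed.

Lemma infinitely_often_mono (b c : nat -> bool) :
  (forall i, b i = true -> c i = true) -> infinitely_often b -> infinitely_often c.
Proof. intros Hbc Hb N; destruct (Hb N) as (i & Hi & Hbi); eauto. Qed.

Lemma not_infinitely_often (b : nat -> bool) :
  ~ infinitely_often b -> eventually (fun i => b i = false).
Proof.
  intros Hb; apply not_all_ex_not in Hb as [N HN].
  exists N; intros i Hi; destruct (b i) eqn:E; auto.
  exfalso; apply HN; eauto.
Qed.

Fixpoint count_upto (b : nat -> bool) (L : nat) : nat :=
  match L with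
  | 0 => 0
  | S L => count_upto b L + Nat.b2n (b L)
  end.

Lemma count_upto_mono (b : nat -> bool) (L L' : nat) :
  (L <= L')%nat -> (count_upto b L <= count_upto b L')%nat.
Proof. induction 1; cbn [count_upto]; lia. Qed.

Lemma count_upto_le (b : nat -> bool) (L : nat) : (count_upto b L <= L)%nat.
Proof. induction L; cbn [count_upto]; [lia|destruct (b L); simpl; lia]. Qed.

Lemma count_upto_increase (b : nat -> bool) (L L' : nat) :
  (count_upto b L < count_upto b L')%nat -> exists i, (L <= i < L')%nat /\ b i = true.
Proof.
  induction L' as [|L' IH]; cbn [count_upto]; intros H; [lia|].
  destruct (Nat.le_gt_cases L L') as [HL|HL].
  - destruct (b L') eqn:E; [exists L'; split; [lia|auto]|].
    destruct IH as (i & Hi & Hbi); [simpl in H; lia|]. exists i; split; [lia|auto].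
  - pose proof (count_upto_mono b (S L') L HL) as Hmono.
    cbn [count_upto] in Hmono; lia.
Qed.

Lemma infinitely_often_count (b : nat -> bool) :
  infinitely_often b <-> forall n, exists L, (n <= count_upto b L)%nat.
Proof.
  split.
  - intros Hb n; induction n as [|n [L HL]]; [exists 0%nat; lia|].
    destruct (Hb L) as (i & Hi & Hbi). exists (S i); cbn [count_upto]; rewrite Hbi.
    pose proof (count_upto_mono b L i Hi); simpl; lia.
  - intros Hb N; destruct (Hb (S N)) as [L HL].
    pose proof (count_upto_le b N).
    destruct (count_upto_increase b N L) as (i & Hi & Hbi); [lia|].
    exists i; split; [lia|auto].
Qed.

Lemma even_double (n : nat) : Nat.even (2 * n) = true.
Proof. rewrite Nat.even_mul; reflexivity. Qed.

Lemma even_succ_double (n : nat) : Nat.even (S (2 * n)) = false.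
Proof. rewrite Nat.even_succ, <- Nat.negb_even, even_double; reflexivity. Qed.

Lemma agree_mono (x y : pt) (m n : nat) : (m <= n)%nat -> agree x y n -> agree x y m.
Proof. intros Hmn Hxy i Hi; apply Hxy; lia. Qed.

Lemma agree_sym (x y : pt) (n : nat) : agree x y n -> agree y x n.
Proof. intros Hxy i Hi; symmetry; auto. Qed.

Lemma agree_trans (x y z : pt) (n : nat) : agree x y n -> agree y z n -> agree x z n.
Proof. intros Hxy Hyz i Hi; rewrite Hxy, Hyz; auto. Qed.

Definition splice (x : pt) (p : nat) (t : pt) : pt :=
  fun i => if i <? p then x i else t i.

Lemma agree_splice (x : pt) (p : nat) (t : pt) : agree x (splice x p t) p.
Proof. intros i Hi; unfold splice; apply Nat.ltb_lt in Hi; rewrite Hi; reflexivity. Qed.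

Lemma splice_ge (x : pt) (p : nat) (t : pt) (i : nat) :
  (p <= i)%nat -> splice x p t i = t i.
Proof. intros Hi; unfold splice; apply Nat.ltb_ge in Hi; rewrite Hi; reflexivity. Qed.

Lemma zero_dimensional_subspace (X : subspace) : zero_dimensional X.
Proof.
  intros U x [HUX HU] Ux. destruct (HU x Ux) as [n Hn].
  exists (fun y => X y /\ agree x y n). split; [split; [split|split; [|split]]|split].
  - intros y [? ?]; auto.
  - intros y [Xy Ay]; exists n; intros z Xz Az; split; auto.
    intros i Hi; rewrite Ay, Az; auto.
  - intros y [? ?]; auto.
  - intros y [? ?]; auto.
  - intros y [Xy Ny]; exists n; intros z Xz Az; split; auto.
    intros [_ Az']; apply Ny; split; auto. intros i Hi; rewrite Az', Az; auto.
  - split; auto; intros i Hi; auto.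
  - intros y [Xy Ay]; apply Hn; auto.
Qed.

Lemma finitely_supported_code (b : nat -> bool) (L : nat) :
  (forall i, (L <= i)%nat -> b i = false) -> exists c, forall i, Nat.testbit c i = b i.
Proof.
  revert b; induction L as [|L IH]; intros b Hb.
  - exists 0%nat; intros i; rewrite Nat.bits_0; symmetry; apply Hb; lia.
  - destruct (IH (fun i => b (S i))) as [c Hc]; [intros i Hi; apply Hb; lia|].
    exists (if b 0%nat then 2 * c + 1 else 2 * c)%nat; intros [|i].
    + destruct (b 0%nat); [apply Nat.testbit_odd_0|apply Nat.testbit_even_0].
    + rewrite <- Hc; destruct (b 0%nat);
        [apply Nat.testbit_odd_succ|apply Nat.testbit_even_succ]; lia.
Qed.

Lemma countable_finite_modifications (y : pt) :
  countable (fun x => eventually (fun i => x i = y i)).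
Proof.
  exists (fun c i => xorb (y i) (Nat.testbit c i)).
  intros x [N HN].
  destruct (finitely_supported_code (fun i => xorb (y i) (x i)) N) as [c Hc].
  { intros i Hi; rewrite HN by lia; apply Bool.xorb_nilpotent. }
  exists c; apply functional_extensionality; intros i; rewrite Hc.
  destruct (y i), (x i); reflexivity.
Qed.

Lemma compact_increasing_cover (K : subspace) (V : nat -> subspace) :
  Defs.compact K -> (forall m, Defs.open_set (V m)) ->
  (forall m m', (m <= m')%nat -> subset (V m) (V m')) ->
  subset K (fun y => exists m, V m y) -> exists m, subset K (V m).
Proof.
  intros HK HV Hmono Hcover. destruct (HK nat V HV Hcover) as [ms Hms].
  exists (list_max ms); intros y Ky. destruct (Hms y Ky) as (m & Hm & Hy).
  apply (Hmono m); auto.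
  pose proof (proj1 (list_max_le ms (list_max ms)) (le_n _)) as Hall.
  rewrite Forall_forall in Hall; auto.
Qed.

(** * Fusion sequences *)

Lemma dependent_choice (A : Type) (P : A -> Prop) (R : nat -> A -> A -> Prop) (a0 : A) :
  P a0 -> (forall k a, P a -> exists b, P b /\ R k a b) ->
  exists f : nat -> A, forall k, P (f k) /\ R k (f k) (f (S k)).
Proof.
  intros H0 Hstep.
  assert (Hnext : forall k (a : {a | P a}), {b : {b | P b} | R k (proj1_sig a) (proj1_sig b)}).
  { intros k [a Ha].
    destruct (constructive_indefinite_description _ (Hstep k a Ha)) as [b [Hb Hab]].
    exact (exist _ (exist _ b Hb) Hab). }
  set (g := fix g k : {a | P a} :=
         match k with 0 => exist _ a0 H0 | S k => proj1_sig (Hnext k (g k)) end).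
  exists (fun k => proj1_sig (g k)); intros k; split; [apply proj2_sig|].
  exact (proj2_sig (Hnext k (g k))).
Qed.

Definition chain (w : nat -> pt) (l : nat -> nat) : Prop :=
  forall k, (l k < l (S k))%nat /\ agree (w k) (w (S k)) (l k).

Definition converges_to (w : nat -> pt) (z : pt) : Prop :=
  forall n, eventually (fun k => agree z (w k) n).

Lemma converges_to_coord (w : nat -> pt) (z : pt) (i : nat) :
  converges_to w z -> eventually (fun k => w k i = z i).
Proof.
  intros Hz; destruct (Hz (S i)) as [K HK].
  exists K; intros k Hk; symmetry; apply HK; lia.
Qed.

Section Chain.

Variables (w : nat -> pt) (l : nat -> nat).
Hypothesis Hchain : chain w l.

Lemma chain_length_mono (n m : nat) : (n <= m)%nat -> (l n <= l m)%nat.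
Proof. induction 1 as [|m _ IH]; [lia|]. pose proof (proj1 (Hchain m)); lia. Qed.

Lemma chain_length_ge (k : nat) : (k <= l k)%nat.
Proof. induction k as [|k IH]; [lia|]. pose proof (proj1 (Hchain k)); lia. Qed.

Lemma chain_agree (n m : nat) : (n <= m)%nat -> agree (w n) (w m) (l n).
Proof.
  induction 1 as [|m Hnm IH]; [intros i _; reflexivity|].
  apply (agree_trans _ (w m)); auto.
  apply (agree_mono _ _ _ (l m)); [apply chain_length_mono; auto|apply Hchain].
Qed.

Lemma chain_converges : converges_to w (fun i => w (S i) i).
Proof.
  intros n; exists n; intros k Hk i Hi.
  apply (chain_agree (S i) k); [lia|].
  pose proof (chain_length_ge (S i)); lia.
Qed.

Lemma chain_limit_agree (z : pt) (n : nat) : converges_to w z -> agree (w n) z (l n).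
Proof.
  intros Hz; destruct (Hz (l n)) as [K HK].
  apply (agree_trans _ (w (Nat.max K n))); [apply chain_agree; lia|].
  apply agree_sym, HK; lia.
Qed.

End Chain.

Lemma fusion (P : pt -> nat -> Prop) (R : nat -> pt -> nat -> pt -> nat -> Prop)
    (w0 : pt) (l0 : nat) :
  P w0 l0 ->
  (forall k w l, P w l ->
     exists w' l', P w' l' /\ (l < l')%nat /\ agree w w' l /\ R k w l w' l') ->
  exists (w : nat -> pt) (l : nat -> nat), chain w l /\
    forall k, P (w k) (l k) /\ R k (w k) (l k) (w (S k)) (l (S k)).
Proof.
  intros H0 Hstep.
  destruct (dependent_choice (pt * nat) (fun a => P (fst a) (snd a))
      (fun k a b => (snd a < snd b)%nat /\ agree (fst a) (fst b) (snd a) /\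
                    R k (fst a) (snd a) (fst b) (snd b)) (w0, l0) H0) as [f Hf].
  { intros k [w l] Hwl. destruct (Hstep k w l Hwl) as (w' & l' & Hw' & Hrest).
    exists (w', l'); auto. }
  exists (fun k => fst (f k)), (fun k => snd (f k)); split.
  - intros k; destruct (Hf k) as (_ & Hl & Hw & _); auto.
  - intros k; destruct (Hf k) as (HP & _ & _ & HR); auto.
Qed.

Lemma half_pow_pos (n : nat) : 0 < (/2) ^ n.
Proof. apply pow_lt; lra. Qed.

Lemma half_pow_lt (n m : nat) : (n < m)%nat -> (/2) ^ m < (/2) ^ n.
Proof.
  induction 1 as [|m _ IH]; simpl.
  - pose proof (half_pow_pos n); lra.
  - pose proof (half_pow_pos m); lra.
Qed.

Lemma half_pow_le (n m : nat) : (n <= m)%nat -> (/2) ^ m <= (/2) ^ n.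
Proof.
  intros Hnm; destruct (Nat.eq_dec n m) as [->|Hne]; [lra|].
  left; apply half_pow_lt; lia.
Qed.

Lemma half_pow_lt_inv (n m : nat) : (/2) ^ m < (/2) ^ n -> (n < m)%nat.
Proof.
  intros H; destruct (Nat.lt_ge_cases n m) as [|Hmn]; auto.
  apply half_pow_le in Hmn; lra.
Qed.

Lemma half_pow_small (eps : R) : 0 < eps -> exists n, (/2) ^ n < eps.
Proof.
  intros Heps.
  destruct (pow_lt_1_zero (/2) ltac:(rewrite Rabs_pos_eq; lra) eps Heps) as [N HN].
  exists N; specialize (HN N (le_n _)).
  rewrite Rabs_pos_eq in HN; auto. left; apply half_pow_pos.
Qed.

Lemma least_witness (P : nat -> Prop) :
  (exists n, P n) -> exists m, P m /\ forall k, P k -> (m <= k)%nat.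
Proof.
  intros H.
  destruct (dec_inh_nat_subset_has_unique_least_element P (fun n => classic (P n)) H)
    as [m [[Hm Hmin] _]].
  eauto.
Qed.

Section FiltrationUltrametric.

Variable E : nat -> pt -> pt -> Prop.
Hypothesis E_antitone : forall m n x y, (m <= n)%nat -> E n x y -> E m x y.
Hypothesis E_sym : forall n x y, E n x y -> E n y x.
Hypothesis E_trans : forall n x y z, E n x y -> E n y z -> E n x z.

(* [2^-n] for the least [n] with [~ E n x y], and [0] if there is none. *)
Definition ultra_dist (x y : pt) : R :=
  match excluded_middle_informative (exists n, ~ E n x y) with
  | left H => (/2) ^ proj1_sig (constructive_indefinite_description _ (least_witness _ H))
  | right _ => 0
  end.

Lemma ultra_dist_lt_iff (x y : pt) (n : nat) : ultra_dist x y < (/2) ^ n <-> E n x y.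
Proof.
  unfold ultra_dist; destruct excluded_middle_informative as [H|H].
  - destruct constructive_indefinite_description as [m [Hm Hmin]]; simpl; split.
    + intros Hlt; apply half_pow_lt_inv in Hlt.
      apply NNPP; intros Hn; specialize (Hmin n Hn); lia.
    + intros Hn; apply half_pow_lt.
      destruct (Nat.lt_ge_cases n m) as [|Hmn]; auto.
      exfalso; apply Hm, (E_antitone m n); auto.
  - split; intros _; [apply NNPP; intros Hn; apply H; eauto|apply half_pow_pos].
Qed.

Lemma ultra_dist_cases (x y : pt) :
  ultra_dist x y = 0 \/ exists c, ultra_dist x y = (/2) ^ c /\ ~ E c x y.
Proof.
  unfold ultra_dist; destruct excluded_middle_informative as [H|H]; auto.
  destruct constructive_indefinite_description as [m [Hm Hmin]]; simpl; eauto.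
Qed.

Lemma ultra_dist_nonneg (x y : pt) : 0 <= ultra_dist x y.
Proof.
  destruct (ultra_dist_cases x y) as [->|[c [-> _]]]; [lra|].
  left; apply half_pow_pos.
Qed.

Lemma ultra_dist_ge (x y : pt) (c : nat) : ~ E c x y -> (/2) ^ c <= ultra_dist x y.
Proof. intros Hc; apply Rnot_lt_le; intros Hlt; apply Hc, ultra_dist_lt_iff; auto. Qed.

Lemma ultra_dist_zero_iff (x y : pt) : ultra_dist x y = 0 <-> forall n, E n x y.
Proof.
  split.
  - intros H n; apply ultra_dist_lt_iff; rewrite H; apply half_pow_pos.
  - intros H; destruct (ultra_dist_cases x y) as [|[c [_ Hc]]]; auto.
    exfalso; auto.
Qed.

Lemma ultra_dist_sym (x y : pt) : ultra_dist x y = ultra_dist y x.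
Proof.
  assert (Hle : forall x y, ultra_dist x y <= ultra_dist y x).
  { intros a b; destruct (ultra_dist_cases a b) as [->|[c [-> Hc]]];
      [apply ultra_dist_nonneg|].
    apply ultra_dist_ge; intros Hba; apply Hc, E_sym; auto. }
  apply Rle_antisym; apply Hle.
Qed.

Lemma ultra_dist_triangle (x y z : pt) :
  ultra_dist x z <= ultra_dist x y + ultra_dist y z.
Proof.
  pose proof (ultra_dist_nonneg x y); pose proof (ultra_dist_nonneg y z).
  destruct (ultra_dist_cases x z) as [->|[c [-> Hc]]]; [lra|].
  destruct (classic (E c x y)) as [Hxy|Hxy]; [|apply ultra_dist_ge in Hxy; lra].
  destruct (classic (E c y z)) as [Hyz|Hyz]; [|apply ultra_dist_ge in Hyz; lra].
  exfalso; apply Hc, (E_trans c x y z); auto.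
Qed.

End FiltrationUltrametric.

Lemma geometric_cauchy (X : subspace) (d : pt -> pt -> R) (s : nat -> pt) :
  (forall x, X x -> d x x = 0) -> (forall x y, X x -> X y -> d x y = d y x) ->
  (forall x y z, X x -> X y -> X z -> d x z <= d x y + d y z) ->
  (forall k, X (s k)) -> (forall k, d (s k) (s (S k)) < (/2) ^ k) ->
  forall eps, 0 < eps ->
    exists N, forall m k, (m >= N)%nat -> (k >= N)%nat -> d (s m) (s k) < eps.
Proof.
  intros Hrefl Hsym Htri Hs Hstep eps Heps.
  assert (Hbound : forall k j, (k <= j)%nat -> d (s k) (s j) <= 2 * (/2) ^ k - 2 * (/2) ^ j).
  { intros k j Hkj; induction Hkj as [|j Hkj IH]; [rewrite Hrefl by auto; lra|].
    pose proof (Htri (s k) (s j) (s (S j)) (Hs k) (Hs j) (Hs (S j))).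
    pose proof (Hstep j). simpl pow; lra. }
  destruct (half_pow_small (eps / 2)) as [N HN]; [lra|].
  assert (Hlt : forall a b, (N <= a <= b)%nat -> d (s a) (s b) < eps).
  { intros a b [Ha Hb]. pose proof (Hbound a b Hb).
    pose proof (half_pow_le N a Ha). pose proof (half_pow_pos b). lra. }
  exists N; intros m k Hm Hk.
  destruct (Nat.le_ge_cases m k); [apply Hlt; lia|].
  rewrite Hsym by auto; apply Hlt; lia.
Qed.

(* A complete metric yields a modulus [N]: a sequence whose (k+1)-st term agrees
   with its k-th term [s k] on [N (s k) k] coordinates is d-Cauchy, so it converges
   inside the space, and then also pointwise. *)
Lemma completely_metrizable_fusion (X : subspace) :
  completely_metrizable X ->
  exists N : pt -> nat -> nat, forall s : nat -> pt,
    (forall k, X (s k)) -> (forall k, agree (s k) (s (S k)) (N (s k) k)) ->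
    exists z, X z /\ converges_to s z.
Proof.
  intros (d & Hnn & Hzero & Hsym & Htri & Hopen & Hfine & Hcomplete).
  destruct (choice (fun (p : pt * nat) n => X (fst p) ->
      forall y, X y -> agree (fst p) y n -> d (fst p) y < (/2) ^ snd p)) as [N HN].
  { intros [x k]; simpl. destruct (classic (X x)) as [Hx|Hx]; [|exists 0%nat; tauto].
    destruct (Hopen x Hx _ (half_pow_pos k)) as [n Hn]; eauto. }
  exists (fun x k => N (x, k)); intros s Hs Hagree.
  destruct (Hcomplete s Hs) as [z [Hz Hlim]].
  { apply (geometric_cauchy X d s); auto.
    - intros x Hx; apply (Hzero x x Hx Hx); reflexivity.
    - intros k; apply (HN (s k, k)); [apply Hs|apply Hs|apply Hagree]. }
  exists z; split; auto. intros n.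
  destruct (Hfine z Hz n) as [eps [Heps Hball]]. destruct (Hlim eps Heps) as [K HK].
  exists K; intros k Hk. apply Hball; [apply Hs|].
  rewrite Hsym by auto; apply HK; lia.
Qed.

Definition odds : pt := fun i => negb (Nat.even i).

Definition even_bits (x : pt) (i : nat) : bool := Nat.even i && x i.

Definition evens_infinite (x : pt) : Prop := infinitely_often (even_bits x).

Definition near_odds (x : pt) : Prop := eventually (fun i => x i = odds i).

Definition T_semifilter (x : pt) : Prop := evens_infinite x \/ near_odds x.

Lemma evens_infinite_full : evens_infinite (fun _ => true).
Proof.
  intros N; exists (2 * N)%nat; split; [lia|].
  unfold even_bits; rewrite even_double; reflexivity.
Qed.

Lemma semifilter_T_semifilter : semifilter T_semifilter.
Proof.
  split; [|split; [|split]].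
  - intros [Hev|[N HN]].
    + destruct (Hev 0%nat) as (i & _ & Hi).
      unfold even_bits in Hi; rewrite Bool.andb_false_r in Hi; discriminate.
    + specialize (HN (S (2 * N)) ltac:(lia)).
      unfold odds in HN; rewrite even_succ_double in HN; discriminate.
  - left; apply evens_infinite_full.
  - intros x y [Hev|[M HM]] [N HN]; [left|right].
    + apply (infinitely_often_eventually_eq (even_bits x)); auto.
      exists N; intros i Hi; unfold even_bits; rewrite HN; auto.
    + exists (Nat.max N M); intros i Hi; rewrite <- HN by lia; apply HM; lia.
  - intros x y [Hev|[N HN]] Hxy.
    + left; apply (infinitely_often_mono (even_bits x)); auto.
      intros i; unfold even_bits; destruct (Nat.even i); simpl; auto.
    + destruct (classic (evens_infinite y)) as [Hy|Hy]; [left; auto|right].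
      destruct (not_infinitely_often _ Hy) as [M HM].
      exists (Nat.max N M); intros i Hi.
      specialize (HM i ltac:(lia)); specialize (HN i ltac:(lia)).
      unfold even_bits, odds in *; destruct (Nat.even i); simpl in *; auto.
Qed.

Lemma near_odds_countable : countable near_odds.
Proof. exact (countable_finite_modifications odds). Qed.

Definition agree_evens (n : nat) (x y : pt) : Prop :=
  forall i, (count_upto (even_bits x) i < n)%nat -> x i = y i.

Lemma agree_evens_count (n : nat) (x y : pt) (L : nat) :
  agree_evens n x y ->
  Nat.min (count_upto (even_bits x) L) n = Nat.min (count_upto (even_bits y) L) n.
Proof.
  intros Hxy; induction L as [|L IH]; [reflexivity|]. cbn [count_upto].
  destruct (Nat.lt_ge_cases (count_upto (even_bits x) L) n) as [Hlt|Hge]; [|lia].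
  assert (Hcount : count_upto (even_bits x) L = count_upto (even_bits y) L) by lia.
  assert (Hbit : even_bits x L = even_bits y L)
    by (unfold even_bits; rewrite (Hxy L Hlt); reflexivity).
  rewrite Hcount, Hbit; reflexivity.
Qed.

Lemma agree_evens_antitone (m n : nat) (x y : pt) :
  (m <= n)%nat -> agree_evens n x y -> agree_evens m x y.
Proof. intros Hmn Hxy i Hi; apply Hxy; lia. Qed.

Lemma agree_evens_sym (n : nat) (x y : pt) : agree_evens n x y -> agree_evens n y x.
Proof.
  intros Hxy i Hi; symmetry; apply Hxy.
  pose proof (agree_evens_count n x y i Hxy); lia.
Qed.

Lemma agree_evens_trans (n : nat) (x y z : pt) :
  agree_evens n x y -> agree_evens n y z -> agree_evens n x z.
Proof.
  intros Hxy Hyz i Hi; rewrite (Hxy i Hi); apply Hyz.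
  pose proof (agree_evens_count n x y i Hxy); lia.
Qed.

Lemma agree_evens_agree (n : nat) (x y : pt) : agree_evens n x y -> agree x y n.
Proof. intros Hxy i Hi; apply Hxy; pose proof (count_upto_le (even_bits x) i); lia. Qed.

Lemma agree_evens_of_agree (n : nat) (x : pt) :
  evens_infinite x -> exists L, forall y, agree x y L -> agree_evens n x y.
Proof.
  intros Hx; destruct (proj1 (infinitely_often_count _) Hx n) as [L HL].
  exists L; intros y Hxy i Hi; apply Hxy.
  destruct (Nat.lt_ge_cases i L) as [|HLi]; auto.
  pose proof (count_upto_mono (even_bits x) L i HLi); lia.
Qed.

Lemma evens_infinite_complete (s : nat -> pt) :
  (forall k, evens_infinite (s k)) ->
  (forall n, exists N, forall m k, (N <= m)%nat -> (N <= k)%nat -> agree_evens n (s m) (s k)) ->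
  exists z, evens_infinite z /\ forall n, eventually (fun k => agree_evens n (s k) z).
Proof.
  intros Hs Hcauchy. destruct (choice _ Hcauchy) as [N HN].
  set (z := fun i => s (N (S i)) i).
  assert (Hz : forall n, agree_evens n (s (N n)) z).
  { intros n i Hi; unfold z.
    transitivity (s (Nat.max (N n) (N (S i))) i); [apply (HN n); auto; lia|].
    symmetry; apply (agree_evens_agree (S i) _ _ (HN (S i) _ _ (le_n _) (Nat.le_max_r _ _))).
    lia. }
  exists z; split.
  - apply infinitely_often_count; intros n.
    destruct (proj1 (infinitely_often_count _) (Hs (N n)) n) as [L HL].
    exists L; pose proof (agree_evens_count n _ _ L (Hz n)); lia.
  - intros n; exists (N n); intros k Hk.
    apply (agree_evens_trans n _ (s (N n))); [apply HN; lia|apply Hz].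
Qed.

Lemma evens_infinite_completely_metrizable : completely_metrizable evens_infinite.
Proof.
  pose proof (ultra_dist_lt_iff agree_evens agree_evens_antitone) as Hlt.
  exists (ultra_dist agree_evens).
  split; [|split; [|split; [|split; [|split; [|split]]]]].
  - intros; apply ultra_dist_nonneg.
  - intros x y _ _; rewrite ultra_dist_zero_iff by exact agree_evens_antitone; split.
    + intros Hxy; apply functional_extensionality; intros i.
      apply (agree_evens_agree (S i)); auto.
    + intros <- n i _; reflexivity.
  - intros; apply ultra_dist_sym; [exact agree_evens_antitone|exact agree_evens_sym].
  - intros; apply ultra_dist_triangle; [exact agree_evens_antitone|exact agree_evens_trans].
  - intros x Hx eps Heps. destruct (half_pow_small eps Heps) as [n Hn].
    destruct (agree_evens_of_agree n x Hx) as [L HL].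
    exists L; intros y _ Hxy. specialize (proj2 (Hlt x y n) (HL y Hxy)); lra.
  - intros x _ n; exists ((/2) ^ n); split; [apply half_pow_pos|].
    intros y _ Hxy; apply agree_evens_agree, Hlt; auto.
  - intros s Hs Hcauchy.
    destruct (evens_infinite_complete s Hs) as [z [Hz Hlim]].
    { intros n; destruct (Hcauchy _ (half_pow_pos n)) as [N HN].
      exists N; intros m k Hm Hk; apply Hlt, HN; auto. }
    exists z; split; auto. intros eps Heps.
    destruct (half_pow_small eps Heps) as [n Hn]. destruct (Hlim n) as [K HK].
    exists K; intros k Hk. specialize (proj2 (Hlt (s k) z n) (HK k Hk)); lra.
Qed.

(** * Nowhere σ-compact *)

Definition odd_free (x0 : pt) (n0 : nat) (y : pt) : Prop :=
  agree x0 y n0 /\ forall i, (n0 <= i)%nat -> Nat.even i = false -> y i = false.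

Lemma odd_free_not_near_odds (x0 : pt) (n0 : nat) (y : pt) :
  odd_free x0 n0 y -> ~ near_odds y.
Proof.
  intros [_ Hy] [N HN].
  specialize (HN (S (2 * Nat.max N n0)) ltac:(lia)).
  rewrite Hy in HN by (lia || apply even_succ_double).
  unfold odds in HN; rewrite even_succ_double in HN; discriminate.
Qed.

Lemma odd_free_compact_bound (x0 : pt) (n0 : nat) (K : subspace) (w : pt) (l : nat) :
  Defs.compact K -> subset K T_semifilter -> (n0 <= l)%nat -> agree x0 w n0 ->
  exists m, forall y, K y -> odd_free x0 n0 y -> agree w y l ->
    exists i, (l <= i < m)%nat /\ Nat.even i = true /\ y i = true.
Proof.
  intros HK HKT Hl Hw0.
  set (V := fun m y => ~ agree w y l \/
              (exists i, (n0 <= i)%nat /\ Nat.even i = false /\ y i = true) \/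
              (exists i, (l <= i < m)%nat /\ Nat.even i = true /\ y i = true)).
  destruct (compact_increasing_cover K V HK) as [m Hm].
  - intros m; split; [intros y _; exact I|].
    intros y [Hy|[(i & Hi & Hei & Hyi)|(i & Hi & Hei & Hyi)]].
    + exists l; intros z _ Hyz; left; intros Hwz.
      apply Hy, (agree_trans _ z); auto; apply agree_sym; auto.
    + exists (S i); intros z _ Hyz; right; left; exists i; rewrite <- Hyz by lia; auto.
    + exists (S i); intros z _ Hyz; right; right; exists i; rewrite <- Hyz by lia; auto.
  - intros m m' Hmm' y [Hy|[Hy|(i & Hi & Hei & Hyi)]]; [left|right; left|right; right]; auto.
    exists i; repeat split; auto; lia.
  - intros y Ky. destruct (classic (agree w y l)) as [Hwy|Hwy]; [|exists 0%nat; left; auto].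
    destruct (classic (exists i, (n0 <= i)%nat /\ Nat.even i = false /\ y i = true))
      as [Hodd|Hodd]; [exists 0%nat; right; left; auto|].
    assert (Hfree : odd_free x0 n0 y).
    { split; [apply (agree_trans _ w); auto; apply (agree_mono _ _ _ l); auto|].
      intros i Hi Hei; destruct (y i) eqn:E; auto; exfalso; apply Hodd; eauto. }
    destruct (HKT y Ky) as [Hev|Hnear];
      [|exfalso; apply (odd_free_not_near_odds x0 n0 y); auto].
    destruct (Hev l) as (i & Hi & Hyi).
    unfold even_bits in Hyi; apply Bool.andb_true_iff in Hyi as [Hei Hyi].
    exists (S i); right; right; exists i; repeat split; auto; lia.
  - exists m; intros y Ky [_ Hy] Hwy.
    destruct (Hm y Ky) as [Hwy'|[(i & Hi & Hei & Hyi)|Hi]]; auto.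
    + contradiction.
    + rewrite Hy in Hyi; auto; discriminate.
Qed.

Lemma odd_free_escape_compact (x0 : pt) (n0 : nat) (K : subspace) (w : pt) (l : nat) :
  Defs.compact K -> subset K T_semifilter -> (n0 <= l)%nat -> odd_free x0 n0 w ->
  exists w' l', odd_free x0 n0 w' /\ (l < l')%nat /\ agree w w' l /\
    (exists e, (l <= e < l')%nat /\ Nat.even e = true /\ w' e = true) /\
    (forall y, odd_free x0 n0 y -> agree w' y l' -> ~ K y).
Proof.
  intros HK HKT Hl [Hw0 Hw].
  destruct (odd_free_compact_bound x0 n0 K w l HK HKT Hl Hw0) as [m Hm].
  (* the only new element, [e], lies beyond the bound [m] *)
  set (e := (2 * (m + l))%nat).
  assert (He : Nat.even e = true) by apply even_double.
  set (w' := splice w l (fun i => i =? e)).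
  assert (Hww' : agree w w' l) by apply agree_splice.
  exists w', (S e); split; [split|split; [lia|split; [auto|split]]].
  - apply (agree_trans _ w); auto; apply (agree_mono _ _ _ l); auto.
  - intros i Hi Hei. destruct (Nat.lt_ge_cases i l) as [Hil|Hil].
    + rewrite <- (Hww' i Hil); auto.
    + unfold w'; rewrite splice_ge by auto.
      apply Nat.eqb_neq; intros ->; congruence.
  - exists e; split; [lia|split; auto].
    unfold w'; rewrite splice_ge by lia; apply Nat.eqb_refl.
  - intros y Hy Hw'y Ky.
    destruct (Hm y Ky Hy) as (i & Hi & Hei & Hyi).
    { apply (agree_trans _ w'); auto; apply (agree_mono _ _ _ (S e)); auto; lia. }
    rewrite <- (Hw'y i) in Hyi by lia. unfold w' in Hyi.
    rewrite splice_ge in Hyi by lia. apply Nat.eqb_eq in Hyi; lia.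
Qed.

Lemma T_nowhere_sigma_compact : nowhere sigma_compact T_semifilter.
Proof.
  split; [exists (fun _ => true); left; apply evens_infinite_full|].
  intros U [HUT HU] [x0 Hx0] [K [HK HKU]].
  destruct (HU x0 Hx0) as [n0 Hn0].
  assert (HKT : forall k, subset (K k) T_semifilter) by (intros k y Hy; apply HUT, HKU; eauto).
  destruct (fusion (fun w l => (n0 <= l)%nat /\ odd_free x0 n0 w)
      (fun k _ l w' l' => (exists e, (l <= e < l')%nat /\ Nat.even e = true /\ w' e = true) /\
                          forall y, odd_free x0 n0 y -> agree w' y l' -> ~ K k y)
      (splice x0 n0 (fun _ => false)) n0) as (w & l & Hchain & Hwl).
  - split; [lia|split; [apply agree_splice|]]. intros i Hi _; apply splice_ge; auto.
  - intros k w l [Hl Hw].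
    destruct (odd_free_escape_compact x0 n0 (K k) w l (HK k) (HKT k) Hl Hw)
      as (w' & l' & Hw' & Hll' & Hagree & Heven & Hescape).
    exists w', l'; split; [split; [lia|auto]|auto].
  - set (z := fun i => w (S i) i).
    assert (Hz : converges_to w z) by apply (chain_converges w l Hchain).
    assert (Hfree : odd_free x0 n0 z).
    { destruct (Hwl 0%nat) as [[Hl0 [Hw0 _]] _]. split.
      - apply (agree_trans _ (w 0%nat)); auto.
        apply (agree_mono _ _ _ (l 0%nat)); auto; apply chain_limit_agree; auto.
      - intros i Hi Hei. destruct (converges_to_coord w z i Hz) as [k Hk].
        rewrite <- (Hk k) by lia. apply (proj2 (proj2 (proj1 (Hwl k)))); auto. }
    assert (Hev : evens_infinite z).
    { intros N. destruct (proj2 (Hwl N)) as [(e & He & Hee & Hwe) _].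
      exists e; split; [pose proof (chain_length_ge w l Hchain N); lia|].
      unfold even_bits; rewrite Hee, <- (chain_limit_agree w l Hchain z (S N) Hz e) by lia.
      exact Hwe. }
    assert (HzU : U z) by (apply Hn0; [left; exact Hev|exact (proj1 Hfree)]).
    destruct (proj1 (HKU z) HzU) as [k Hk].
    apply (proj2 (proj2 (Hwl k)) z Hfree); auto. apply chain_limit_agree; auto.
Qed.

(** * Nowhere completely metrizable *)

Definition even_free (x0 : pt) (n0 : nat) (y : pt) : Prop :=
  agree x0 y n0 /\ (forall i, (n0 <= i)%nat -> Nat.even i = true -> y i = false) /\
  near_odds y.

Lemma even_free_drop_odd (x0 : pt) (n0 m M : nat) (y : pt) :
  (n0 <= m)%nat -> even_free x0 n0 y ->
  exists y' m', even_free x0 n0 y' /\ (m < m')%nat /\ agree y y' (Nat.max m M) /\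
    exists q, (m <= q < m')%nat /\ Nat.even q = false /\ y' q = false.
Proof.
  intros Hm (Hy0 & Hy & _).
  set (p := S (2 * Nat.max m M)).
  set (y' := splice y p (fun i => odds i && negb (i =? p))%bool).
  assert (Hyy' : agree y y' p) by apply agree_splice.
  exists y', (S p); split; [split; [|split]|split; [lia|split]].
  - apply (agree_trans _ y); auto; apply (agree_mono _ _ _ p); auto; lia.
  - intros i Hi Hei. destruct (Nat.lt_ge_cases i p) as [Hip|Hip].
    + rewrite <- (Hyy' i Hip); auto.
    + unfold y'; rewrite splice_ge by auto; unfold odds; rewrite Hei; reflexivity.
  - exists (S p); intros i Hi. unfold y'; rewrite splice_ge by lia.
    replace (i =? p) with false by (symmetry; apply Nat.eqb_neq; lia).
    apply Bool.andb_true_r.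
  - apply (agree_mono _ _ _ p); auto; lia.
  - exists p; split; [lia|split; [apply even_succ_double|]].
    unfold y'; rewrite splice_ge, Nat.eqb_refl by lia; apply Bool.andb_false_r.
Qed.

Lemma T_nowhere_completely_metrizable : nowhere completely_metrizable T_semifilter.
Proof.
  split; [exists (fun _ => true); left; apply evens_infinite_full|].
  intros U [HUT HU] [x0 Hx0] HUcm.
  destruct (HU x0 Hx0) as [n0 Hn0].
  destruct (completely_metrizable_fusion U HUcm) as [N HN].
  assert (HfreeU : forall y, even_free x0 n0 y -> U y)
    by (intros y (Hy0 & _ & Hy); apply Hn0; [right|]; auto).
  destruct (fusion (fun y m => (n0 <= m)%nat /\ even_free x0 n0 y)
      (fun k y m y' m' => agree y y' (N y k) /\
         exists q, (m <= q < m')%nat /\ Nat.even q = false /\ y' q = false)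
      (splice x0 n0 odds) n0) as (w & l & Hchain & Hwl).
  - split; [lia|split; [apply agree_splice|split]].
    + intros i Hi Hei; rewrite splice_ge by auto; unfold odds; rewrite Hei; reflexivity.
    + exists n0; intros i Hi; apply splice_ge; auto.
  - intros k y m [Hm Hy].
    destruct (even_free_drop_odd x0 n0 m (N y k) y Hm Hy)
      as (y' & m' & Hy' & Hmm' & Hyy' & Hq).
    exists y', m'; split; [split; [lia|auto]|split; [auto|split; [|split; [|auto]]]];
      apply (agree_mono _ _ _ (Nat.max m (N y k))); auto; lia.
  - destruct (HN w) as [z [HzU Hz]].
    { intros k; apply HfreeU, (proj2 (proj1 (Hwl k))). }
    { intros k; apply (proj1 (proj2 (Hwl k))). }
    destruct (HUT z HzU) as [Hev|[M HM]].
    + destruct (Hev n0) as (i & Hi & Hzi).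
      unfold even_bits in Hzi; apply Bool.andb_true_iff in Hzi as [Hei Hzi].
      destruct (converges_to_coord w z i Hz) as [k Hk].
      rewrite <- (Hk k) in Hzi by lia.
      destruct (proj2 (proj1 (Hwl k))) as (_ & Hfree & _).
      rewrite Hfree in Hzi; auto; discriminate.
    + destruct (proj2 (proj2 (Hwl M))) as (q & Hq & Hqodd & Hwq).
      rewrite (chain_limit_agree w l Hchain z (S M) Hz q) in Hwq by lia.
      pose proof (chain_length_ge w l Hchain M).
      specialize (HM q ltac:(lia)). rewrite Hwq in HM.
      unfold odds in HM; rewrite Hqodd in HM; discriminate.
Qed.

Theorem proposition5p4 : exists S : subspace, semifilter S /\ is_T S.
Proof.
  exists T_semifilter; split; [apply semifilter_T_semifilter|].
  split; [apply zero_dimensional_subspace|].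
  split; [|split; [apply T_nowhere_sigma_compact|apply T_nowhere_completely_metrizable]].
  exists evens_infinite, near_odds.
  split; [apply evens_infinite_completely_metrizable|].
  split; [apply near_odds_countable|].
  intros x; unfold T_semifilter; tauto.
Qed.
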